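(* Let $\lambda=(\lambda_1,\ldots,\lambda_\ell)$ be a partition with $\ell$ positive parts. If $2\leq\ell<n$ and $\lambda_2\geq 2$, then the poset $\mathcal B_\lambda^n$ is not a lattice.
   Context: For $N\geq 1$ and a partition $\nu$ with at most $N$ positive parts, $\mathcal B_\nu^N$ is the set of semistandard Young tableaux of shape $\nu$ (rows weakly increasing, columns strictly increasing) with entries in $\{1,\ldots,N+1\}$, partially ordered by the reflexive transitive closure of $T<F_i(T)$ for $i\in\{1,\ldots,N\}$ with $F_i(T)\neq 0$. Here $F_i$ is the type A crystal lowering operator: in the reading word of $T$ (rows read from bottom to top, each row left to right) keep only letters $i$ and $i+1$, replace each $i$ by '')'' and each $i+1$ by ''('', and match parentheses in the usual way; if there is no unmatched '')'', $F_i(T)=0$; otherwise $F_i(T)$ is obtained by changing the entry $i$ corresponding to the rightmost unmatched '')'' into $i+1$. *)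

From mathcomp Require Import all_boot.
Set Implicit Arguments. Unset Strict Implicit. Unset Printing Implicit Defensive.

(* A tableau is a list of rows (top row first), each row a list of entries. *)
Definition tableau := seq (seq nat).

Definition is_partition (lam : seq nat) : bool :=
  sorted geq lam && all (fun k => 0 < k) lam.

Definition is_SSYT (N : nat) (lam : seq nat) (t : tableau) : bool :=
  [&& map size t == lam,
      all (fun r => sorted leq r) t,
      all (fun r => all (fun x => (1 <= x) && (x <= N.+1)) r) t &
      all (fun k => all (fun j => nth 0 (nth [::] t k) j < nth 0 (nth [::] t k.+1) j)
                        (iota 0 (size (nth [::] t k.+1))))
          (iota 0 (size t).-1)].

Definition reading_word (t : tableau) : seq nat := flatten (rev t).

(* Position (in the word) of the rightmost unmatched ")" where letters i are ")"
   and letters i+1 are "(".  [cnt] is the number of currently unmatched "(". *)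
Fixpoint rum (i : nat) (w : seq nat) (pos cnt : nat) (acc : option nat) : option nat :=
  match w with
  | [::] => acc
  | x :: w' =>
      if x == i then
        (if cnt is c.+1 then rum i w' pos.+1 c acc else rum i w' pos.+1 0 (Some pos))
      else if x == i.+1 then rum i w' pos.+1 cnt.+1 acc
      else rum i w' pos.+1 cnt acc
  end.

(* Crystal lowering operator F_i; None represents F_i(T) = 0. *)
Definition F_op (i : nat) (t : tableau) : option tableau :=
  let w := reading_word t in
  match rum i w 0 0 None with
  | None => None
  | Some p => Some (rev (reshape (rev (map size t)) (set_nth 0 w p i.+1)))
  end.

Inductive crystal_le (N : nat) (t : tableau) : tableau -> Prop :=
  | crystal_le_refl : crystal_le N t t
  | crystal_le_step t' t'' i :
      crystal_le N t t' -> 1 <= i <= N -> F_op i t' = Some t'' -> crystal_le N t t''.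

Definition B_is_lattice (N : nat) (lam : seq nat) : Prop :=
  forall x y, is_SSYT N lam x -> is_SSYT N lam y ->
    (exists z, [/\ is_SSYT N lam z, crystal_le N x z, crystal_le N y z &
       forall w, is_SSYT N lam w -> crystal_le N x w -> crystal_le N y w -> crystal_le N z w])
    /\
    (exists z, [/\ is_SSYT N lam z, crystal_le N z x, crystal_le N z y &
       forall w, is_SSYT N lam w -> crystal_le N w x -> crystal_le N w y -> crystal_le N w z]).

From mathcomp Require Import all_boot zify.
Set Implicit Arguments. Unset Strict Implicit. Unset Printing Implicit Defensive.

(* The operators F_i raise the weight (the sum of the entries) by one, so the
   crystal order is graded by weight.  Let T(e,f,g) be the tableau of shape lambda
   with first row 1...1e, second row 2...2fg and constant lower rows.  Then
   x = T(1,2,4) and y = T(2,2,3) have the common upper bounds z1 = T(2,2,4) one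
   level up (F_1 x = F_3 y = z1) and z2 = T(2,3,4) two levels up
   (F_1 F_2 x = F_3 F_2 y = z2).  A join of x and y lies strictly above both, so
   by grading it is z1; but no F_i maps z1 to z2, so z1 is not below z2. *)

Lemma rum_Some i w pos cnt acc p :
  rum i w pos cnt acc = Some p ->
  acc = Some p \/ pos <= p < pos + size w /\ nth 0 w (p - pos) = i.
Proof.
elim: w pos cnt acc => [|x w IH] pos cnt acc /=; first by left.
have step c a : rum i w pos.+1 c a = Some p -> a = acc \/ a = Some pos /\ x = i ->
    acc = Some p \/ pos <= p < pos + (size w).+1 /\ nth 0 (x :: w) (p - pos) = i.
  move=> /IH [-> [-> | [[->] ->]] | [/andP[lo hi] <-]]; [by left | | ].
  - by right; rewrite subnn; split=> //; apply/andP; lia.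
  - by right; rewrite (_ : p - pos = (p - pos.+1).+1); [split=> //; apply/andP | ]; lia.
case: eqP => [xi|_]; first by case: cnt => [|c] /step; apply; [right | left].
by case: eqP => _ /step; apply; left.
Qed.

Lemma rum_cat_inert i u v pos cnt acc :
  all (fun x => (x != i) && (x != i.+1)) u ->
  rum i (u ++ v) pos cnt acc = rum i v (pos + size u) cnt acc.
Proof.
elim: u pos => [|x u IH] pos /=; first by rewrite addn0.
by case/andP=> /andP[/negbTE -> /negbTE ->] /IH ->; rewrite addnS.
Qed.

Lemma rum_nseq_inert i c k v pos cnt acc : c != i -> c != i.+1 ->
  rum i (nseq k c ++ v) pos cnt acc = rum i v (pos + k) cnt acc.
Proof. by move=> ci ci1; rewrite rum_cat_inert ?size_nseq // all_nseq ci ci1 orbT. Qed.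

Lemma rum_nseq_open i k v pos cnt acc :
  rum i (nseq k i.+1 ++ v) pos cnt acc = rum i v (pos + k) (cnt + k) acc.
Proof.
elim: k pos cnt => [|k IH] pos cnt /=; first by rewrite !addn0.
by rewrite (gtn_eqF (ltnSn i)) eqxx IH !addSnnS.
Qed.

Lemma rum_nseq_close_unmatched i k v pos cnt acc : cnt <= k ->
  rum i (nseq k i ++ i :: v) pos cnt acc = rum i v (pos + k).+1 0 (Some (pos + k)).
Proof.
by elim: k pos cnt acc => [|k IH] pos [|c] acc //= hc; rewrite eqxx ?addn0 // IH // addSnnS.
Qed.

Lemma sumn_set_nth_succ (w : seq nat) p :
  p < size w -> sumn (set_nth 0 w p (nth 0 w p).+1) = (sumn w).+1.
Proof. by elim: w p => [|x w IH] [|p] //= hp; rewrite ?addSn // IH // addnS. Qed.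

Definition weight (t : tableau) : nat := sumn (reading_word t).

Lemma F_op_Some i t t' : F_op i t = Some t' ->
  exists2 p, rum i (reading_word t) 0 0 None = Some p &
    [/\ p < size (reading_word t), nth 0 (reading_word t) p = i &
        reading_word t' = set_nth 0 (reading_word t) p i.+1].
Proof.
rewrite /F_op; case e: rum => [p|] // [<-]; exists p => //.
have [//|[/andP[_]]] := rum_Some e; rewrite add0n subn0 => hp hn.
split=> //; rewrite /reading_word revK reshapeKr // size_set_nth.
by rewrite (maxn_idPr hp) size_flatten /shape map_rev sumn_rev.
Qed.

Lemma F_op_weight i t t' : F_op i t = Some t' -> weight t' = (weight t).+1.
Proof.
by case/F_op_Some=> p _ [hp hn ht']; rewrite /weight ht' -hn sumn_set_nth_succ.
Qed.

Lemma F_op_at i t t' u v :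
  reading_word t = u ++ i :: v -> reading_word t' = u ++ i.+1 :: v ->
  map size t' = map size t -> rum i (reading_word t) 0 0 None = Some (size u) ->
  F_op i t = Some t'.
Proof.
move=> ht ht' hs hr; rewrite /F_op hr ht.
have -> : set_nth 0 (u ++ i :: v) (size u) i.+1 = u ++ i.+1 :: v.
  by elim: u {ht ht' hr} => //= x u ->.
by rewrite -ht' -hs /reading_word -map_rev flattenK revK.
Qed.

Lemma crystal_le_F N t t' i : 1 <= i <= N -> F_op i t = Some t' -> crystal_le N t t'.
Proof. exact: crystal_le_step (crystal_le_refl N t). Qed.

Lemma crystal_le_weight N x z : crystal_le N x z -> x = z \/ weight x < weight z.
Proof.
elim=> [|t' t'' i _ IH _ /F_op_weight ->]; first by left.
by right; case: IH => [->|/ltnW].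
Qed.

Lemma crystal_le_cover N x z : crystal_le N x z -> weight z = (weight x).+1 ->
  exists i, F_op i x = Some z.
Proof.
case=> [/n_Sn //|t' t'' i le_x_t' _ hF]; rewrite (F_op_weight hF) => -[hw].
by case: (crystal_le_weight le_x_t') => [->|]; [exists i | rewrite hw ltnn].
Qed.

Lemma weight_upper_bound N x y z : x <> y -> weight x = weight y ->
  crystal_le N x z -> crystal_le N y z -> weight x < weight z.
Proof.
move=> nxy wxy /crystal_le_weight [<-|//] /crystal_le_weight [eyx|].
  by case: nxy.
by rewrite wxy ltnn.
Qed.

Lemma not_lattice_of_uncovered N lam x y z1 z2 i j :
  is_SSYT N lam x -> is_SSYT N lam y -> is_SSYT N lam z1 -> is_SSYT N lam z2 ->
  x <> y -> 1 <= i <= N -> F_op i x = Some z1 -> 1 <= j <= N -> F_op j y = Some z1 ->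
  crystal_le N x z2 -> crystal_le N y z2 -> weight z2 = (weight z1).+1 ->
  (forall k, F_op k z1 <> Some z2) -> ~ B_is_lattice N lam.
Proof.
move=> Bx By Bz1 Bz2 nxy hi Fx hj Fy le_x_z2 le_y_z2 wz2 nF /(_ x y Bx By).
case=> -[s [_ le_x_s le_y_s s_least]] _.
have wxy : weight x = weight y.
  by apply: succn_inj; rewrite -(F_op_weight Fx) (F_op_weight Fy).
have ws := weight_upper_bound nxy wxy le_x_s le_y_s.
case: (crystal_le_weight (s_least z1 Bz1 (crystal_le_F hi Fx) (crystal_le_F hj Fy))).
  move=> es; rewrite -es in wz2 nF.
  by have [k /nF] := crystal_le_cover (s_least z2 Bz2 le_x_z2 le_y_z2) wz2.
by rewrite (F_op_weight Fx) ltnS leqNgt ws.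
Qed.

Fixpoint constant_rows (c : nat) (s : seq nat) : tableau :=
  if s is k :: s' then nseq k c :: constant_rows c.+1 s' else [::].

Lemma shape_constant_rows c s : map size (constant_rows c s) = s.
Proof. by elim: s c => //= k s IH c; rewrite size_nseq IH. Qed.

Lemma nth_constant_rows c s k :
  nth [::] (constant_rows c s) k = nseq (nth 0 s k) (c + k).
Proof. by elim: s c k => [|a s IH] c [|k] //=; rewrite ?addn0 // IH addSnnS. Qed.

Lemma mem_constant_rows c s r x :
  r \in constant_rows c s -> x \in r -> c <= x < c + size s.
Proof.
elim: s c => [|a s IH] c //=; rewrite inE => /orP[/eqP -> | /IH hr /hr]; last lia.
by rewrite mem_nseq => /andP[_ /eqP ->]; lia.
Qed.

Lemma sorted_nseq_cat c k r :
  sorted leq r -> all (leq c) r -> sorted leq (nseq k c ++ r).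
Proof.
move=> sr cr; elim: k => //= k.
by rewrite (path_sortedE leq_trans) all_cat cr all_nseq leqnn orbT.
Qed.

Section Witness.
Variables (m1 m2 : nat) (rest : seq nat).

(* Rows below the second are constant, with entries 5, 6, ...: they are inert for
   F_1, F_2, F_3, and their entries stay in {1, ..., n+1} exactly when ell < n. *)
Definition witness (e f g : nat) : tableau :=
  (nseq m1 1 ++ [:: e]) :: (nseq m2 2 ++ [:: f; g]) :: constant_rows 5 rest.

Local Notation lower := (reading_word (constant_rows 5 rest)).

Lemma shape_witness e f g : map size (witness e f g) = [:: m1.+1, m2.+2 & rest].
Proof. by rewrite /= !size_cat !size_nseq shape_constant_rows !addn1 addn2. Qed.

Lemma reading_word_witness e f g :
  reading_word (witness e f g) = lower ++ nseq m2 2 ++ [:: f, g & nseq m1 1 ++ [:: e]].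
Proof.
by rewrite /reading_word /witness !rev_cons -!cats1 !flatten_cat /= !cats0 -!catA.
Qed.

Lemma rum_witness i e f g : i <= 3 ->
  rum i (reading_word (witness e f g)) 0 0 None =
  rum i (nseq m2 2 ++ [:: f, g & nseq m1 1 ++ [:: e]]) (size lower) 0 None.
Proof.
move=> i3; rewrite reading_word_witness rum_cat_inert //.
apply/allP=> x /flattenP[r]; rewrite mem_rev => /mem_constant_rows hr /hr.
by move=> /andP[x5 _]; rewrite !gtn_eqF //; lia.
Qed.

Lemma F1_witness_124 : m2 < m1 -> F_op 1 (witness 1 2 4) = Some (witness 2 2 4).
Proof.
move=> m21.
apply: (F_op_at (u := lower ++ nseq m2 2 ++ [:: 2, 4 & nseq m1 1]) (v := [::])).
1,2: by rewrite reading_word_witness -!catA.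
  by rewrite !shape_witness.
rewrite rum_witness // rum_nseq_open /= rum_nseq_close_unmatched /=; last lia.
by congr Some; rewrite !size_cat /= !size_nseq; lia.
Qed.

Lemma F3_witness_223 : F_op 3 (witness 2 2 3) = Some (witness 2 2 4).
Proof.
apply: (F_op_at (u := lower ++ nseq m2 2 ++ [:: 2]) (v := nseq m1 1 ++ [:: 2])).
1,2: by rewrite reading_word_witness -!catA.
  by rewrite !shape_witness.
rewrite rum_witness // rum_nseq_inert //= rum_nseq_inert //=.
by congr Some; rewrite !size_cat /= size_nseq; lia.
Qed.

Lemma F2_witness_124 : F_op 2 (witness 1 2 4) = Some (witness 1 3 4).
Proof.
apply: (F_op_at (u := lower ++ nseq m2 2) (v := 4 :: nseq m1 1 ++ [:: 1])).
1,2: by rewrite reading_word_witness -!catA.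
  by rewrite !shape_witness.
rewrite rum_witness // rum_nseq_close_unmatched //= rum_nseq_inert //=.
by congr Some; rewrite size_cat size_nseq; lia.
Qed.

Lemma F1_witness_134 : m2 <= m1 -> F_op 1 (witness 1 3 4) = Some (witness 2 3 4).
Proof.
move=> m21.
apply: (F_op_at (u := lower ++ nseq m2 2 ++ [:: 3, 4 & nseq m1 1]) (v := [::])).
1,2: by rewrite reading_word_witness -!catA.
  by rewrite !shape_witness.
rewrite rum_witness // rum_nseq_open /= rum_nseq_close_unmatched /=; last lia.
by congr Some; rewrite !size_cat /= !size_nseq; lia.
Qed.

Lemma F2_witness_223 : F_op 2 (witness 2 2 3) = Some (witness 2 3 3).
Proof.
apply: (F_op_at (u := lower ++ nseq m2 2) (v := 3 :: nseq m1 1 ++ [:: 2])).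
1,2: by rewrite reading_word_witness -!catA.
  by rewrite !shape_witness.
rewrite rum_witness // rum_nseq_close_unmatched //= rum_nseq_inert //=.
by congr Some; rewrite size_cat size_nseq; lia.
Qed.

Lemma F3_witness_233 : F_op 3 (witness 2 3 3) = Some (witness 2 3 4).
Proof.
apply: (F_op_at (u := lower ++ nseq m2 2 ++ [:: 3]) (v := nseq m1 1 ++ [:: 2])).
1,2: by rewrite reading_word_witness -!catA.
  by rewrite !shape_witness.
rewrite rum_witness // rum_nseq_inert //= rum_nseq_inert //=.
by congr Some; rewrite !size_cat /= size_nseq; lia.
Qed.

Lemma F_op_witness_224_neq_234 k : F_op k (witness 2 2 4) <> Some (witness 2 3 4).
Proof.
case/F_op_Some=> p hr [_ _ hw].
have E f : reading_word (witness 2 f 4) =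
    (lower ++ nseq m2 2) ++ [:: f, 4 & nseq m1 1 ++ [:: 2]].
  by rewrite reading_word_witness -!catA.
set q := size (lower ++ nseq m2 2).
have := congr1 (nth 0 ^~ q) hw; rewrite nth_set_nth /= !E !nth_cat !ltnn !subnn /=.
case: eqP => [qp [k2] | //]; move: hr; rewrite -qp -k2 rum_witness //.
rewrite rum_nseq_close_unmatched //= rum_nseq_inert //= => -[].
by rewrite /q size_cat size_nseq; lia.
Qed.

Lemma witness_SSYT n e f g : m2 < m1 -> size rest + 3 <= n ->
  1 <= e < g -> 2 <= f <= g -> g <= 4 ->
  is_SSYT n [:: m1.+1, m2.+2 & rest] (witness e f g).
Proof.
move=> m21 hn /andP[e1 eg] /andP[f2 fg] g4.
have row2_le4 j : nth 0 (nseq m2 2 ++ [:: f; g]) j <= 4.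
  rewrite nth_cat size_nseq nth_nseq; case: ltnP => _ //.
  by case: (j - m2) => [|[|k]]; rewrite /= ?nth_nil; lia.
apply/and4P; split; first by rewrite shape_witness.
- rewrite /= !sorted_nseq_cat //= ?fg ?e1 ?f2 ?(leq_trans f2 fg) //.
  apply/allP=> r /(nthP [::]) [k _ <-]; rewrite nth_constant_rows.
  by rewrite -[nseq _ _]cats0 sorted_nseq_cat.
- rewrite /= !all_cat !all_nseq /= !andbT; apply/and3P; split; try (apply/andP; lia).
  by apply/allP=> r /mem_constant_rows hr; apply/allP=> x /hr; lia.
- apply/allP=> k; rewrite mem_iota /= => hk; apply/allP=> j; rewrite mem_iota /= => hj.
  case: k hk hj => [|[|k]] _ /=.
  + rewrite size_cat size_nseq !nth_cat !size_nseq !nth_nseq /= => hj.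
    case: (ltnP j m2) => [hj2 | hj2]; first by rewrite (ltn_trans hj2 m21).
    case: (ltnP j m1) => hj1.
    * have [->|->] : j - m2 = 0 \/ j - m2 = 1 by lia.
        exact: f2.
      exact: leq_trans f2 fg.
    * by have [-> ->] : j - m1 = 0 /\ j - m2 = 1 by lia.
  + rewrite nth_constant_rows size_nseq nth_nseq => ->.
    exact: leq_ltn_trans (row2_le4 j) _.
  + rewrite !nth_constant_rows size_nseq !nth_nseq => ->; case: ifP => _; lia.
Qed.
End Witness.

Theorem lemma5p8 (n : nat) (lam : seq nat) :
  is_partition lam -> 2 <= size lam -> size lam < n -> 2 <= nth 0 lam 1 ->
  ~ B_is_lattice n lam.
Proof.
case: lam => [|l1 [|l2 rest]] // /andP[/= /andP[l21 _] _] _ /= ltn l2_2.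
set m1 := l1.-1; set m2 := l2 - 2.
have m21 : m2 < m1 by rewrite /m1 /m2; lia.
have hn : size rest + 3 <= n by lia.
have -> : [:: l1, l2 & rest] = [:: m1.+1, m2.+2 & rest] by congr [:: _, _ & _]; lia.
have B e f g := @witness_SSYT m1 m2 rest n e f g m21 hn.
have i1 : 1 <= 1 <= n by lia.
have i2 : 1 <= 2 <= n by lia.
have i3 : 1 <= 3 <= n by lia.
have F124 := F1_witness_124 rest m21; have F134 := F1_witness_134 rest (ltnW m21).
apply: (not_lattice_of_uncovered (B 1 2 4 isT isT isT) (B 2 2 3 isT isT isT)
  (B 2 2 4 isT isT isT) (B 2 3 4 isT isT isT) _ i1 F124 i3 (F3_witness_223 _ _ _)).
- by move=> [] /(congr1 (last 0)); rewrite !last_cat.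
- exact: crystal_le_step (crystal_le_F i2 (F2_witness_124 _ _ _)) i1 F134.
- exact: crystal_le_step (crystal_le_F i2 (F2_witness_223 _ _ _)) i3 (F3_witness_233 _ _ _).
- by rewrite (F_op_weight F134) (F_op_weight (F2_witness_124 _ _ _)) (F_op_weight F124).
- exact: F_op_witness_224_neq_234.
Qed.
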